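(* Let $A\in\mathbb{R}^{n\times n}$, $C\in\mathbb{R}^{p\times n}$ and $K\in\mathbb{N}$, and let $$\mathcal{O}_K=\begin{bmatrix} C^\top & (CA)^\top & \cdots & (CA^{K-1})^\top\end{bmatrix}^\top\in\mathbb{R}^{pK\times n}.$$ Assume $\mathcal{O}_K$ has full column rank, set $\mathcal{W}_o:=\mathcal{O}_K^\top\mathcal{O}_K$, let $\Sigma_v\in\mathbb{R}^{n\times n}$ with $\Sigma_v\succ 0$, and define $M:=\mathcal{O}_K\mathcal{W}_o^{-1}\mathcal{O}_K^\top$ and $N:=\Sigma_v^{-1/2}\mathcal{W}_o^{-1}\mathcal{O}_K^\top$. Consider the optimization problem $$\max_{R\in\mathbb{R}^{pK\times pK},\ \beta\in\mathbb{R}^+}\ \beta\quad\text{subject to}\quad N^\top N+R-MRM\succeq \beta I_{pK}.$$ The optimal value of the objective function is $\beta_{\mathrm{opt}}=\lambda_{\min}(\Sigma_v^{-1}\mathcal{W}_o^{-1})$.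
   Context: $\Sigma_v^{-1/2}$ denotes the symmetric positive definite square root of $\Sigma_v^{-1}$. $\mathbb{R}^+$ denotes the positive reals. $Y\succeq \beta I$ means $Y-\beta I$ is symmetric positive semidefinite. $\lambda_{\min}(\cdot)$ denotes the smallest eigenvalue (the eigenvalues of $\Sigma_v^{-1}\mathcal{W}_o^{-1}$ are real and positive). *)

From HB Require Import structures.
From mathcomp Require Import all_boot all_order all_algebra.
From mathcomp Require Import reals.
Set Implicit Arguments. Unset Strict Implicit. Unset Printing Implicit Defensive.
Import Order.TTheory GRing.Theory Num.Theory.
Local Open Scope ring_scope.

Definition psd (R : realFieldType) (m : nat) (Y : 'M[R]_m) : Prop :=
  Y^T = Y /\ forall v : 'rV[R]_m, 0 <= (v *m Y *m v^T) 0 0.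

Definition pd (R : realFieldType) (m : nat) (Y : 'M[R]_m) : Prop :=
  Y^T = Y /\ forall v : 'rV[R]_m, v != 0 -> 0 < (v *m Y *m v^T) 0 0.

(* extended observability matrix O_K = [C; CA; ...; CA^(K-1)] in R^(pK x n);
   row k*p + r (k < K, r < p) is row r of C A^k *)
Definition obsv (R : realFieldType) (n p K : nat) (A : 'M[R]_n) (C : 'M[R]_(p, n))
  : 'M[R]_(K * p, n) :=
  \matrix_(i < K * p, j < n) (mxvec (\matrix_(k < K, r < p) (C *m A ^+ k) r j)) 0 i.

Definition is_lambda_min (R : realFieldType) (m : nat) (X : 'M[R]_m) (l : R) : Prop :=
  eigenvalue X l /\ forall l', eigenvalue X l' -> l <= l'.

Definition feasible (R : realFieldType) (q n : nat) (M : 'M[R]_q) (N : 'M[R]_(n, q))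
  (Rm : 'M[R]_q) (beta : R) : Prop :=
  0 < beta /\ psd (N^T *m N + Rm - M *m Rm *m M - beta%:M).

From HB Require Import structures.
From mathcomp Require Import all_boot all_order all_algebra.
From mathcomp Require Import reals.
From mathcomp Require Import boolp classical_sets topology normedtype derive.
From mathcomp Require Import ring lra.
Import Order.TTheory GRing.Theory Num.Theory numFieldNormedType.Exports.
Set Implicit Arguments. Unset Strict Implicit. Unset Printing Implicit Defensive.
Local Open Scope ring_scope.
Local Open Scope classical_set_scope.

(* Put W = O^T O and P = S^T S = Sv^-1, both positive definite. M is the orthogonal
   projection onto the range of O, and for x = v O W^-1 the forms of N^T N and M at v are
   the forms of P and W at x. Testing the LMI at v = x O^T, which M fixes, cancels the
   R-terms and leaves beta (x W x^T) <= x P x^T: every feasible beta is below the minimum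
   lam of the generalized Rayleigh quotient x P x^T / x W x^T. Conversely R = lam (I - M)
   turns the LMI into N^T N - lam M >= 0, which is that Rayleigh bound again. The minimum is
   attained on the unit sphere at some c, the first-order condition c P = lam c W holds
   because P - lam W is semidefinite and vanishes at c, and so lam is the least
   eigenvalue of P W^-1. *)

Section QuadraticForm.
Variables (R : comPzRingType) (n : nat).
Implicit Types (X Y : 'M[R]_n) (x u v : 'rV[R]_n).

Definition qform X x : R := (x *m X *m x^T) 0 0.

Lemma qformE X x : qform X x = \sum_j \sum_i x 0 i * X i j * x 0 j.
Proof. by rewrite /qform mxE; apply: eq_bigr => j _; rewrite !mxE big_distrl. Qed.

Lemma qform0 X : qform X 0 = 0.
Proof. by rewrite /qform !mul0mx mxE. Qed.

Lemma qformD X Y x : qform (X + Y) x = qform X x + qform Y x.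
Proof. by rewrite /qform mulmxDr mulmxDl mxE. Qed.

Lemma qformN X x : qform (- X) x = - qform X x.
Proof. by rewrite /qform mulmxN mulNmx mxE. Qed.

Lemma qformB X Y x : qform (X - Y) x = qform X x - qform Y x.
Proof. by rewrite qformD qformN. Qed.

Lemma qformZ a X x : qform (a *: X) x = a * qform X x.
Proof. by rewrite /qform -scalemxAr -scalemxAl mxE. Qed.

Lemma qformZv a X x : qform X (a *: x) = a ^+ 2 * qform X x.
Proof. by rewrite /qform -scalemxAl linearZ -scalemxAl -scalemxAr scalerA mxE. Qed.

Lemma qform1 x : qform 1%:M x = (x *m x^T) 0 0.
Proof. by rewrite /qform mulmx1. Qed.

Lemma qform_scalar a x : qform a%:M x = a * qform 1%:M x.
Proof. by rewrite -[a%:M]scalemx1 qformZ. Qed.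

Lemma qform_eigen X Y l x : x *m X = l *: (x *m Y) -> qform X x = l * qform Y x.
Proof. by rewrite /qform => ->; rewrite -scalemxAl mxE. Qed.

Lemma qform_polar X u v t : X^T = X ->
  qform X (u + t *: v) = qform X u + 2 * t * (u *m X *m v^T) 0 0 + t ^+ 2 * qform X v.
Proof.
move=> X_sym.
have sym_uv : (v *m X *m u^T) 0 0 = (u *m X *m v^T) 0 0.
  transitivity ((v *m X *m u^T)^T 0 0); first by rewrite [RHS]mxE.
  by rewrite !trmx_mul trmxK X_sym mulmxA.
rewrite /qform linearD linearZ /= !mulmxDl !mulmxDr -!scalemxAl -!scalemxAr.
move: sym_uv; move: (u *m X *m u^T) (u *m X *m v^T) (v *m X *m u^T) (v *m X *m v^T).
by move=> a b c d cb; rewrite !mxE cb; ring.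
Qed.

End QuadraticForm.

Lemma qform_congruence (R : comPzRingType) n m (B : 'M[R]_(n, m)) (X : 'M[R]_m)
    (x : 'rV[R]_n) :
  qform (B *m X *m B^T) x = qform X (x *m B).
Proof. by rewrite /qform trmx_mul !mulmxA. Qed.

Lemma quadratic_ge0_linear_eq0 (R : realFieldType) (a b : R) : 0 <= b ->
  (forall t, 0 <= 2 * t * a + t ^+ 2 * b) -> a = 0.
Proof.
move=> b_ge0 ge0; have b1_gt0 : 0 < b + 1 by lra.
(* t minimizes 2 t a + t^2 (b + 1) *)
pose t := - a / (b + 1).
have value_t : (b + 1) ^+ 2 * (2 * t * a + t ^+ 2 * b) = - (a ^+ 2 * (b + 2)).
  by rewrite /t; field; rewrite gt_eqF.
have : a ^+ 2 * (b + 2) <= 0.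
  by rewrite -oppr_ge0 -value_t mulr_ge0 ?sqr_ge0 ?ge0.
rewrite pmulr_lle0; last lra.
by move=> a2_le0; apply/eqP; rewrite -sqrf_eq0 eq_le a2_le0 sqr_ge0.
Qed.

Section Definiteness.
Variable R : realFieldType.

Lemma qform1_gt0 n (x : 'rV[R]_n) : x != 0 -> 0 < qform 1%:M x.
Proof.
move=> x_neq0; rewrite qform1 mxE lt_def.
have sq_ge0 i : 0 <= x 0 i * x^T i 0 by rewrite mxE -expr2 sqr_ge0.
rewrite sumr_ge0 ?andbT // psumr_eq0 //; apply: contra x_neq0 => /allP x_eq0.
apply/eqP/matrixP => i j; rewrite ord1 mxE.
by have := x_eq0 j (mem_index_enum j); rewrite mxE -expr2 sqrf_eq0 => /eqP.
Qed.

Lemma pd_gram n m (B : 'M[R]_(n, m)) : row_free B -> pd (B *m B^T).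
Proof.
move=> B_free; split; first by rewrite trmx_mul trmxK.
move=> x x_neq0; rewrite -/(qform _ x) -{1}(mulmx1 B) qform_congruence.
by apply: qform1_gt0; rewrite mulmx_free_eq0.
Qed.

Lemma pd_unitmx n (X : 'M[R]_n) : pd X -> X \in unitmx.
Proof.
move=> [_ X_pos]; rewrite unitmxE unitfE; apply/negP => /det0P [v v_neq0 vX].
by have := X_pos v v_neq0; rewrite vX mul0mx mxE ltxx.
Qed.

Lemma psd_qform_eq0 n (Q : 'M[R]_n) c : psd Q -> qform Q c = 0 -> c *m Q = 0.
Proof.
move=> [Q_sym Q_ge0] Qc_eq0; set y := c *m Q.
have Qline t : 0 <= 2 * t * qform 1%:M y + t ^+ 2 * qform Q y.
  by have := Q_ge0 (c + t *: y); rewrite -/(qform _ _) qform_polar // Qc_eq0 add0r qform1.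
apply/eqP; apply: contraT => /qform1_gt0.
by rewrite (quadratic_ge0_linear_eq0 (Q_ge0 y) Qline) ltxx.
Qed.

End Definiteness.

Lemma qform_continuous (R : realType) n (X : 'M[R]_n) : continuous (qform X).
Proof.
rewrite (_ : qform X = fun x => \sum_j \sum_i x 0 i * X i j * x 0 j).
  apply: continuous_big => [|j _]; first exact: add_continuous.
  apply: continuous_big => [|i _ x]; first exact: add_continuous.
  apply: (@continuousM R 'rV[R]_n (fun y => y 0 i * X i j)); last exact: coord_continuous.
  by apply: continuousM; [exact: coord_continuous | exact: cst_continuous].
by apply: funext => x; rewrite qformE.
Qed.

Section GeneralizedRayleigh.
Variables (R : realType) (n : nat) (P W : 'M[R]_n).
Hypotheses (n_gt0 : (0 < n)%N) (W_pd : pd W).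

Lemma rayleigh_quotient_min : exists2 c, c != 0 &
  forall x, x != 0 -> qform P c / qform W c <= qform P x / qform W x.
Proof.
pose sphere := [set x : 'rV[R]_n | `|x| = 1].
have sphere_neq0 x : sphere x -> x != 0.
  by rewrite /sphere /=; apply: contra_eqN => /eqP ->; rewrite normr0 eq_sym oner_eq0.
have normalize x : x != 0 -> sphere (`|x|^-1 *: x).
  by move=> x_neq0; apply: normrZV; rewrite unitfE normr_eq0.
have sphere_nonempty : sphere !=set0.
  exists (`|const_mx 1 : 'rV[R]_n|^-1 *: const_mx 1); apply: normalize.
  by apply/eqP => /matrixP /(_ 0 (Ordinal n_gt0)); rewrite !mxE; apply/eqP; rewrite oner_eq0.
have sphere_compact : compact sphere.
  apply: bounded_closed_compact.
    by exists 1; split => // r r_gt1 x /= ->; rewrite ltW.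
  have -> : sphere = Num.norm @^-1` [set 1 : R] by [].
  by move: (@norm_continuous R 'rV[R]_n) => /continuous_closedP; apply; exact: closed_eq.
have quotient_cont : {within sphere, continuous (fun x => qform P x / qform W x)}.
  apply: continuous_in_subspaceT => x /[1!inE] /sphere_neq0 x_neq0.
  apply: continuousM; first exact: qform_continuous.
  by apply: continuousV; [rewrite gt_eqF ?W_pd.2 | exact: qform_continuous].
have [c /[1!inE] /sphere_neq0 c_neq0 c_min] := EVT_min_rV sphere_nonempty sphere_compact quotient_cont.
exists c => // x x_neq0; have := c_min _ (mem_set (normalize x x_neq0)).
have scale_neq0 : `|x|^-1 ^+ 2 != 0 :> R by rewrite expf_eq0 invr_eq0 normr_eq0 x_neq0.
by rewrite !qformZv invfM mulrACA mulfV // mul1r.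
Qed.

Hypothesis P_sym : P^T = P.

Lemma rayleigh_min_eigenpair : exists lam (c : 'rV[R]_n),
  [/\ c != 0, c *m P = lam *: (c *m W) & forall x, lam * qform W x <= qform P x].
Proof.
have [c c_neq0 c_min] := rayleigh_quotient_min.
set lam := qform P c / qform W c.
have lam_le x : lam * qform W x <= qform P x.
  have [->|x_neq0] := eqVneq x 0; first by rewrite !qform0 mulr0.
  by rewrite -ler_pdivlMr ?W_pd.2 ?c_min.
have Q_psd : psd (P - lam *: W).
  split; first by rewrite linearB linearZ /= P_sym W_pd.1.
  by move=> x; rewrite -/(qform _ x) qformB qformZ subr_ge0.
have Qc_eq0 : qform (P - lam *: W) c = 0.
  by rewrite qformB qformZ divfK ?subrr // gt_eqF ?W_pd.2.
exists lam, c; split => //; apply/eqP.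
by rewrite -subr_eq0 scalemxAr -mulmxBr; apply/eqP/psd_qform_eq0.
Qed.

End GeneralizedRayleigh.

Lemma is_lambda_min_pencil (R : realFieldType) n (P W : 'M[R]_n) lam (c : 'rV[R]_n) :
  pd W -> c != 0 -> c *m P = lam *: (c *m W) ->
  (forall x, lam * qform W x <= qform P x) -> is_lambda_min (P *m invmx W) lam.
Proof.
move=> W_pd c_neq0 c_eigen lam_le; have W_unit := pd_unitmx W_pd.
have eigenE l x : (x *m (P *m invmx W) == l *: x) = (x *m P == l *: (x *m W)).
  by rewrite -(can_eq (mulmxK W_unit)) mulmxA mulmxKV // scalemxAl.
split=> [|l /eigenvalueP [u]].
  by apply/eigenvalueP; exists c => //; apply/eqP; rewrite eigenE c_eigen.
move=> /eqP; rewrite eigenE => /eqP /qform_eigen Pu u_neq0.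
by rewrite -(ler_pM2r (W_pd.2 u u_neq0)) -Pu lam_le.
Qed.

Section ObservabilityLMI.
Variables (R : realFieldType) (n q : nat) (O : 'M[R]_(q, n)) (S : 'M[R]_n).
Hypothesis O_rank : \rank O = n.

Let W := O^T *m O.
Let M := O *m invmx W *m O^T.
Let N := S *m invmx W *m O^T.

Lemma obs_gram_pd : pd (O^T *m O).
Proof.
by rewrite -[X in _ *m X]trmxK; apply: pd_gram; rewrite /row_free mxrank_tr O_rank.
Qed.

Let W_unit : W \in unitmx. Proof. exact: pd_unitmx obs_gram_pd. Qed.

Let invW_sym : (invmx W)^T = invmx W.
Proof. by rewrite trmx_inv obs_gram_pd.1. Qed.

Lemma obs_proj_idem : M *m M = M.
Proof. by rewrite !mulmxA -(mulmxA _ O^T) mulmxKV. Qed.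

Lemma obs_proj_sym : M^T = M.
Proof. by rewrite !trmx_mul trmxK invW_sym mulmxA. Qed.

Lemma qform_obs_proj v : qform M v = qform W (v *m O *m invmx W).
Proof.
by rewrite -mulmxA -qform_congruence trmx_mul invW_sym mulmxKV // mulmxA.
Qed.

Lemma qform_obs_gain v : qform (N^T *m N) v = qform (S^T *m S) (v *m O *m invmx W).
Proof. by rewrite -mulmxA -qform_congruence !trmx_mul trmxK invW_sym !mulmxA. Qed.

Lemma feasible_scaled_complement lam : 0 < lam ->
  (forall x, lam * qform W x <= qform (S^T *m S) x) ->
  feasible M N (lam *: (1%:M - M)) lam.
Proof.
move=> lam_gt0 lam_le; split => //.
have -> : N^T *m N + lam *: (1%:M - M) - M *m (lam *: (1%:M - M)) *m M - lam%:M
    = N^T *m N - lam *: M.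
  rewrite -scalemxAr -scalemxAl mulmxBr mulmxBl mulmx1 !obs_proj_idem subrr scaler0.
  by rewrite subr0 scalerBr scalemx1 addrA addrAC addrK.
split; first by rewrite linearB linearZ /= obs_proj_sym trmx_mul trmxK.
by move=> v; rewrite -/(qform _ v) qformB qformZ qform_obs_gain qform_obs_proj subr_ge0.
Qed.

Lemma feasible_le_rayleigh Rm beta : feasible M N Rm beta ->
  forall x, beta * qform W x <= qform (S^T *m S) x.
Proof.
move=> [_ [_ Y_ge0]] x; pose v := x *m O^T.
have vOW : v *m O *m invmx W = x by rewrite -(mulmxA x) mulmxK.
have vM : v *m M = v by rewrite !mulmxA vOW.
have qform_MRmM : qform (M *m Rm *m M) v = qform Rm v.
  by rewrite -[X in _ *m X]obs_proj_sym qform_congruence vM.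
have qform_v : qform 1%:M v = qform W x.
  by rewrite qform1 /qform trmx_mul trmxK !mulmxA.
have := Y_ge0 v; rewrite -/(qform _ v) !qformB qformD qform_MRmM addrK.
by rewrite qform_obs_gain qform_scalar qform_v vOW subr_ge0.
Qed.

End ObservabilityLMI.

Theorem theorem7 (R : realType) (n p K : nat) (hn : (0 < n)%N)
  (A : 'M[R]_n) (C : 'M[R]_(p, n))
  (hrank : \rank (obsv K A C) = n)
  (Sv : 'M[R]_n) (hSv : pd Sv)
  (S : 'M[R]_n) (hS : pd S) (hSS : S *m S = invmx Sv) :
  let O := obsv K A C in
  let W := O^T *m O in
  let M := O *m invmx W *m O^T in
  let N := S *m invmx W *m O^T in
  exists beta_opt : R,
    is_lambda_min (invmx Sv *m invmx W) beta_opt /\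
    (exists Rm : 'M[R]_(K * p), feasible M N Rm beta_opt) /\
    (forall (Rm : 'M[R]_(K * p)) (beta : R), feasible M N Rm beta -> beta <= beta_opt).
Proof.
(* [hSv] is unused: positivity of Sv^-1 = S S already follows from [hS]. *)
move=> O W M N.
have W_pd : pd W := obs_gram_pd hrank.
have P_pd : pd (S^T *m S).
  by rewrite hS.1 -{2}hS.1; apply: pd_gram; rewrite row_free_unit pd_unitmx.
have [lam [c [c_neq0 c_eigen lam_le]]] := rayleigh_min_eigenpair hn W_pd P_pd.1.
have lam_gt0 : 0 < lam.
  by have := P_pd.2 c c_neq0; rewrite -/(qform _ c) (qform_eigen c_eigen) pmulr_lgt0 // W_pd.2.
exists lam; split; [|split].
- by rewrite -hSS -{1}hS.1; exact: is_lambda_min_pencil c_eigen lam_le.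
- by exists (lam *: (1%:M - M)); exact: feasible_scaled_complement.
- move=> Rm beta /(feasible_le_rayleigh hrank) /(_ c).
  by rewrite (qform_eigen c_eigen) ler_pM2r // W_pd.2.
Qed.
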